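(* Let $N_d \le N_m$ be positive integers, let $\Phi_{\mathbf{y}} \in \mathbb{C}^{N_m \times N_m}$ be Hermitian positive definite with largest and smallest eigenvalues $\lambda_{max}$ and $\lambda_{min}$, let $\mathbf{g} \in \mathbb{C}^{N_m}$ be nonzero, and let $\mathbf{\Psi} \in \mathbb{C}^{N_d \times N_m}$. Let $\delta \in (0,1)$ be such that (i) every eigenvalue of $\mathbf{\Psi}\mathbf{\Psi}^H$ lies in $[1-\delta,\,1+\delta]$, and (ii) $(1-\delta)\|\mathbf{g}\|^2 \le \|\mathbf{\Psi}\mathbf{g}\|^2 \le (1+\delta)\|\mathbf{g}\|^2$. Define the full-complexity MVDR output power $p_{MVDR} = \left(\mathbf{g}^H \Phi_{\mathbf{y}}^{-1}\mathbf{g}\right)^{-1}$, the compressed MVDR output power $p_{CMVDR} = \left(\mathbf{g}^H \mathbf{\Psi}^H (\mathbf{\Psi}\Phi_{\mathbf{y}}\mathbf{\Psi}^H)^{-1}\mathbf{\Psi}\mathbf{g}\right)^{-1}$, and the regret $R = p_{CMVDR} - p_{MVDR}$. Then $$\frac{\lambda_{min}}{\|\mathbf{g}\|^2} \le p_{MVDR} \le \frac{\lambda_{max}}{\|\mathbf{g}\|^2},\qquad \frac{(1-\delta)\lambda_{min}}{(1+\delta)\|\mathbf{g}\|^2} \le p_{CMVDR} \le \frac{(1+\delta)\lambda_{max}}{(1-\delta)\|\mathbf{g}\|^2},$$ and consequently $$\frac{(1-\delta)\lambda_{min}}{(1+\delta)\|\mathbf{g}\|^2} - \frac{\lambda_{max}}{\|\mathbf{g}\|^2}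 \le R \le \frac{(1+\delta)\lambda_{max}}{(1-\delta)\|\mathbf{g}\|^2} - \frac{\lambda_{min}}{\|\mathbf{g}\|^2}.$$
   Context: $\Phi_{\mathbf{y}}$ models the correlation matrix of the $N_m$ microphone signals, $\mathbf{g}$ is the steering vector to the desired source, and $\mathbf{\Psi}$ is a (random) projection to $N_d$ dimensions; $p_{MVDR}$ and $p_{CMVDR}$ are the output powers of the minimum variance distortionless response beamformer in the full sensor space and in the projected space respectively. Hypotheses (i) and (ii) are the consequences of the restricted isometry property with constant $\delta$ that the paper uses. $\|\cdot\|$ is the Euclidean norm and $^H$ the conjugate transpose. *)

From HB Require Import structures.
From mathcomp Require Import all_boot all_order all_algebra.
Set Implicit Arguments. Unset Strict Implicit. Unset Printing Implicit Defensive.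
Import Order.TTheory GRing.Theory Num.Theory.
Local Open Scope ring_scope.

(* Complex scalars are modelled by an arbitrary numClosedFieldType C
   (e.g. algC, or complex R for a real closed field R); x^* is conjugation. *)

Definition mxH (C : numClosedFieldType) (m n : nat) (A : 'M[C]_(m, n)) : 'M[C]_(n, m) :=
  \matrix_(i, j) (A j i)^*.

Definition mx_hermitian (C : numClosedFieldType) (n : nat) (A : 'M[C]_n) : Prop :=
  mxH A = A.

Definition mx_posdef (C : numClosedFieldType) (n : nat) (A : 'M[C]_n) : Prop :=
  forall v : 'cV[C]_n, v != 0 -> 0 < (mxH v *m A *m v) 0 0.

Definition sqnorm (C : numClosedFieldType) (n : nat) (v : 'cV[C]_n) : C :=
  (mxH v *m v) 0 0.

Definition p_MVDR (C : numClosedFieldType) (n : nat) (Phi : 'M[C]_n) (g : 'cV[C]_n) : C :=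
  ((mxH g *m invmx Phi *m g) 0 0)^-1.

Definition p_CMVDR (C : numClosedFieldType) (nd nm : nat) (Phi : 'M[C]_nm)
    (Psi : 'M[C]_(nd, nm)) (g : 'cV[C]_nm) : C :=
  ((mxH g *m mxH Psi *m invmx (Psi *m Phi *m mxH Psi) *m Psi *m g) 0 0)^-1.

From HB Require Import structures.
From mathcomp Require Import all_boot all_order all_algebra.
Import Order.TTheory GRing.Theory Num.Theory Num.Def.
Set Implicit Arguments. Unset Strict Implicit. Unset Printing Implicit Defensive.
Local Open Scope ring_scope.

(* By the spectral theorem, a Hermitian matrix whose eigenvalues lie in
   [a, b] has its quadratic form v^H A v between a ||v||^2 and b ||v||^2
   (Rayleigh).  Applied to Phi^{-1}, whose eigenvalues lie in
   [1/lmax, 1/lmin], this bounds p_MVDR.  The compressed power is the MVDR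
   power of Psi Phi Psi^H at Psi g; the quadratic form of Psi Phi Psi^H at v
   is that of Phi at Psi^H v, so by (i) its eigenvalues lie in
   [(1 - delta) lmin, (1 + delta) lmax], and (ii) controls ||Psi g||^2. *)

Lemma ler_inv_bounds (R : numFieldType) (x lo hi : R) :
  0 < lo -> lo <= x <= hi -> hi^-1 <= x^-1 <= lo^-1.
Proof.
move=> lo_gt0 /andP[lo_x x_hi]; have x_gt0 := lt_le_trans lo_gt0 lo_x.
have hi_gt0 := lt_le_trans x_gt0 x_hi.
by rewrite !lef_pV2 ?posrE // lo_x x_hi.
Qed.

Lemma ler_pdiv_bounds (R : numFieldType) (c x lo hi : R) :
  0 <= c -> 0 < lo -> lo <= x <= hi -> c / hi <= c / x <= c / lo.
Proof.
move=> c_ge0 lo_gt0 /(ler_inv_bounds lo_gt0) /andP[hi_x x_lo].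
by rewrite !ler_wpM2l.
Qed.

Section HermitianMatrices.
Variable C : numClosedFieldType.

Lemma mxHE m n (A : 'M[C]_(m, n)) : mxH A = map_mx conjC A^T.
Proof. by apply/matrixP => i j; rewrite !mxE. Qed.

Lemma mxH_mul m n p (A : 'M[C]_(m, n)) (B : 'M[C]_(n, p)) :
  mxH (A *m B) = mxH B *m mxH A.
Proof. by rewrite !mxHE trmx_mul map_mxM. Qed.

Lemma mxHK m n (A : 'M[C]_(m, n)) : mxH (mxH A) = A.
Proof. by apply/matrixP => i j; rewrite !mxE conjCK. Qed.

Lemma mxH_eq0 m n (A : 'M[C]_(m, n)) : (mxH A == 0) = (A == 0).
Proof.
apply/eqP/eqP => [AH0|->]; last by apply/matrixP => i j; rewrite !mxE conjC0.
by rewrite -[A]mxHK AH0; apply/matrixP => i j; rewrite !mxE conjC0.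
Qed.

Lemma mx_hermitian_invmx n (A : 'M[C]_n) :
  mx_hermitian A -> mx_hermitian (invmx A).
Proof. by rewrite /mx_hermitian !mxHE trmx_inv map_invmx -mxHE => ->. Qed.

Lemma mx_hermitian_mulmxH m n (A : 'M[C]_n) (B : 'M[C]_(m, n)) :
  mx_hermitian A -> mx_hermitian (B *m A *m mxH B).
Proof. by move=> hA; rewrite /mx_hermitian !mxH_mul mxHK hA mulmxA. Qed.

Lemma mx_hermitian_gram m n (B : 'M[C]_(m, n)) : mx_hermitian (B *m mxH B).
Proof. by rewrite /mx_hermitian mxH_mul mxHK. Qed.

Definition hform n (A : 'M[C]_n) (v : 'cV[C]_n) : C := (mxH v *m A *m v) 0 0.

Lemma hform_gram m n (B : 'M[C]_(m, n)) (v : 'cV[C]_m) :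
  hform (B *m mxH B) v = sqnorm (mxH B *m v).
Proof. by rewrite /hform /sqnorm mxH_mul mxHK !mulmxA. Qed.

Lemma hform_mulmxH m n (A : 'M[C]_n) (B : 'M[C]_(m, n)) (v : 'cV[C]_m) :
  hform (B *m A *m mxH B) v = hform A (mxH B *m v).
Proof. by rewrite /hform mxH_mul mxHK !mulmxA. Qed.

Lemma sqnormE n (v : 'cV[C]_n) : sqnorm v = \sum_i (v i 0)^* * v i 0.
Proof. by rewrite /sqnorm mxE; apply: eq_bigr => i _; rewrite !mxE. Qed.

Lemma sqnorm0 n : sqnorm (0 : 'cV[C]_n) = 0.
Proof. by rewrite /sqnorm mulmx0 mxE. Qed.

Lemma sqnorm_gt0 n (v : 'cV[C]_n) : v != 0 -> 0 < sqnorm v.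
Proof.
move=> v_neq0; have [i vi_neq0] : exists i, v i 0 != 0.
  apply/existsP; apply: contraNT v_neq0; rewrite negb_exists => /forallP v0.
  by apply/eqP/matrixP => i j; rewrite ord1 mxE; exact/eqP/negPn/v0.
rewrite sqnormE (bigD1 i) //=; apply: ltr_wpDr; last by rewrite mulrC mul_conjC_gt0.
by rewrite sumr_ge0 // => k _; rewrite mulrC mul_conjC_ge0.
Qed.

Lemma hform_eigen n (A : 'M[C]_n) (u : 'rV[C]_n) e :
  u *m A = e *: u -> hform A (mxH u) = e * sqnorm (mxH u).
Proof. by move=> uA; rewrite /hform /sqnorm mxHK uA -scalemxAl mxE. Qed.

Lemma posdef_eigenvalue_gt0 n (A : 'M[C]_n) e :
  mx_posdef A -> eigenvalue A e -> 0 < e.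
Proof.
move=> A_pd /eigenvalueP[u uA u_neq0].
have uH_neq0 : mxH u != 0 by rewrite mxH_eq0.
have := A_pd _ uH_neq0; rewrite -/(hform A (mxH u)) (hform_eigen uA).
by rewrite pmulr_lgt0 // sqnorm_gt0.
Qed.

Lemma eigenvalue_hform_bounds n (A : 'M[C]_n) (a b : C) :
  (forall v, a * sqnorm v <= hform A v <= b * sqnorm v) ->
  forall e, eigenvalue A e -> a <= e <= b.
Proof.
move=> hA e /eigenvalueP[u uA u_neq0].
have s_gt0 : 0 < sqnorm (mxH u) by rewrite sqnorm_gt0 ?mxH_eq0.
by have := hA (mxH u); rewrite (hform_eigen uA) !ler_pM2r.
Qed.

Lemma hermitian_spectral n (A : 'M[C]_n) : mx_hermitian A ->
  exists P : 'M[C]_n, exists d : 'rV[C]_n,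
    [/\ P \in unitmx, mxH P *m P = 1%:M, A = mxH P *m diag_mx d *m P
      & forall i, eigenvalue A (d 0 i)].
Proof.
move=> hA; have /orthomx_spectralP A_eq : A \is normalmx.
  by apply/normalmxP; rewrite -mxHE hA.
set P := spectralmx A in A_eq; set d := spectral_diag A in A_eq.
have P_unit : P \in unitmx by apply: spectral_unit.
have PH : invmx P = mxH P.
  by rewrite invmx_unitary ?spectral_unitarymx // mxHE.
exists P, d; split; rewrite -?PH ?mulVmx //.
move=> i; apply/eigenvalueP; exists (row i P).
  rewrite -row_mul A_eq !mulmxA mulmxV // mul1mx row_mul row_diag_mx.
  by rewrite -scalemxAl -rowE.
rewrite rowE mulmx_free_eq0 ?row_free_unit //.
by apply/eqP => /matrixP /(_ 0 i); rewrite !mxE !eqxx => /eqP; rewrite oner_eq0.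
Qed.

Lemma hform_bounds n (A : 'M[C]_n) (a b : C) : mx_hermitian A ->
  (forall e, eigenvalue A e -> a <= e <= b) ->
  forall v, a * sqnorm v <= hform A v <= b * sqnorm v.
Proof.
move=> hA A_eig v; have [P [d [P_unit PHP A_eq d_eig]]] := hermitian_spectral hA.
set w := P *m v.
have sqnorm_w : sqnorm v = sqnorm w.
  by rewrite /sqnorm /w mxH_mul mulmxA -(mulmxA (mxH v)) PHP mulmx1.
have hform_w : hform A v = \sum_i d 0 i * ((w i 0)^* * w i 0).
  rewrite /hform {1}A_eq !mulmxA -mxH_mul -/w -(mulmxA _ P v) -/w.
  rewrite mul_mx_diag mxE; apply: eq_bigr => i _; rewrite !mxE.
  by rewrite mulrAC mulrC.
have w_ge0 i : 0 <= (w i 0)^* * w i 0 by rewrite mulrC mul_conjC_ge0.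
rewrite sqnorm_w hform_w sqnormE !mulr_sumr.
by apply/andP; split; apply: ler_sum => i _; apply: ler_wpM2r => //;
  case/andP: (A_eig _ (d_eig i)).
Qed.

Lemma unitmx_eigenvalue0 n (A : 'M[C]_n) : (A \in unitmx) = ~~ eigenvalue A 0.
Proof.
rewrite /eigenvalue /eigenspace (_ : 0%:M = 0) ?subr0; last first.
  by apply/matrixP => i j; rewrite !mxE mul0rn.
by rewrite kermx_eq0 row_free_unit negbK.
Qed.

Lemma eigenvalue_invmx n (A : 'M[C]_n) e :
  A \in unitmx -> eigenvalue (invmx A) e -> eigenvalue A e^-1.
Proof.
move=> A_unit /eigenvalueP[u uA u_neq0].
have e_neq0 : e != 0.
  apply: contra u_neq0 => /eqP e0; move: uA; rewrite e0 scale0r => uA.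
  by rewrite -[u](mulmxKV A_unit) uA mul0mx.
apply/eigenvalueP; exists u => //.
have := congr1 (mulmx^~ A) uA; rewrite /= mulmxKV // -scalemxAl => u_eq.
by rewrite {2}u_eq scalerA mulVf // scale1r.
Qed.

Lemma invmx_eigenvalue_bounds n (A : 'M[C]_n) (a b : C) : 0 < a ->
  (forall e, eigenvalue A e -> a <= e <= b) ->
  A \in unitmx /\ forall e, eigenvalue (invmx A) e -> b^-1 <= e <= a^-1.
Proof.
move=> a_gt0 A_eig.
have A_unit : A \in unitmx.
  rewrite unitmx_eigenvalue0; apply/negP => /A_eig /andP[a_le0 _].
  by move: (lt_le_trans a_gt0 a_le0); rewrite ltxx.
split=> // e /(eigenvalue_invmx A_unit)/A_eig e_bounds.
by rewrite -[e]invrK; apply: ler_inv_bounds.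
Qed.

Lemma p_MVDR_bounds n (Phi : 'M[C]_n) (g : 'cV[C]_n) (a b : C) :
  mx_hermitian Phi -> 0 < a <= b -> (forall e, eigenvalue Phi e -> a <= e <= b) ->
  g != 0 -> a / sqnorm g <= p_MVDR Phi g <= b / sqnorm g.
Proof.
move=> hPhi /andP[a_gt0 a_le_b] Phi_eig g_neq0.
have [_ invPhi_eig] := invmx_eigenvalue_bounds a_gt0 Phi_eig.
have := hform_bounds (mx_hermitian_invmx hPhi) invPhi_eig g.
move=> /(ler_inv_bounds _); rewrite !invfM !invrK mulrC [b * _]mulrC; apply.
by rewrite mulr_gt0 ?invr_gt0 ?sqnorm_gt0 ?(lt_le_trans a_gt0).
Qed.

Lemma p_CMVDRE nd nm (Phi : 'M[C]_nm) (Psi : 'M[C]_(nd, nm)) (g : 'cV[C]_nm) :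
  p_CMVDR Phi Psi g = p_MVDR (Psi *m Phi *m mxH Psi) (Psi *m g).
Proof. by rewrite /p_CMVDR /p_MVDR mxH_mul !mulmxA. Qed.

Lemma compressed_eigenvalue_bounds nd nm (Phi : 'M[C]_nm) (Psi : 'M[C]_(nd, nm))
    (a b lo hi : C) :
  mx_hermitian Phi -> 0 <= a -> a <= b ->
  (forall e, eigenvalue Phi e -> a <= e <= b) ->
  (forall e, eigenvalue (Psi *m mxH Psi) e -> lo <= e <= hi) ->
  forall e, eigenvalue (Psi *m Phi *m mxH Psi) e -> a * lo <= e <= b * hi.
Proof.
move=> hPhi a_ge0 a_le_b Phi_eig PsiPsiH_eig.
apply: eigenvalue_hform_bounds => v; rewrite hform_mulmxH.
have /andP[Phi_lo Phi_hi] := hform_bounds hPhi Phi_eig (mxH Psi *m v).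
have := hform_bounds (mx_hermitian_gram Psi) PsiPsiH_eig v.
rewrite hform_gram => /andP[sq_lo sq_hi].
rewrite -!mulrA; apply/andP; split.
  by apply: le_trans Phi_lo; rewrite ler_wpM2l.
by apply: le_trans Phi_hi _; rewrite ler_wpM2l // (le_trans a_ge0).
Qed.

Lemma p_CMVDR_bounds nd nm (Phi : 'M[C]_nm) (Psi : 'M[C]_(nd, nm))
    (g : 'cV[C]_nm) (a b lo hi : C) :
  mx_hermitian Phi -> 0 < a <= b -> (forall e, eigenvalue Phi e -> a <= e <= b) ->
  0 < lo -> (forall e, eigenvalue (Psi *m mxH Psi) e -> lo <= e <= hi) ->
  lo * sqnorm g <= sqnorm (Psi *m g) <= hi * sqnorm g -> g != 0 ->
  lo * a / (hi * sqnorm g) <= p_CMVDR Phi Psi g <= hi * b / (lo * sqnorm g).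
Proof.
move=> hPhi /andP[a_gt0 a_le_b] Phi_eig lo_gt0 PsiPsiH_eig Psig_bounds g_neq0.
have s_gt0 := sqnorm_gt0 g_neq0.
have Psig_gt0 : 0 < sqnorm (Psi *m g).
  by case/andP: Psig_bounds => + _; apply: lt_le_trans; rewrite mulr_gt0.
have Psig_neq0 : Psi *m g != 0.
  by apply: contraTneq Psig_gt0 => ->; rewrite sqnorm0 ltxx.
have lo_le_hi : lo <= hi.
  by rewrite -(ler_pM2r s_gt0); case/andP: Psig_bounds => /le_trans; apply.
have M_bounds : 0 < a * lo <= b * hi by rewrite mulr_gt0 // ler_pM // ltW.
have M_eig := compressed_eigenvalue_bounds hPhi (ltW a_gt0) a_le_b Phi_eig PsiPsiH_eig.
have /andP[M_lo M_hi] := p_MVDR_bounds (mx_hermitian_mulmxH Psi hPhi)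
  M_bounds M_eig Psig_neq0.
have los_gt0 : 0 < lo * sqnorm g by rewrite mulr_gt0.
have /andP[alo_gt0 alo_le_bhi] := M_bounds.
have /andP[lo_Psig _] := ler_pdiv_bounds (ltW alo_gt0) los_gt0 Psig_bounds.
have /andP[_ Psig_hi] := ler_pdiv_bounds (ltW (lt_le_trans alo_gt0 alo_le_bhi))
  los_gt0 Psig_bounds.
rewrite p_CMVDRE [lo * a]mulrC [hi * b]mulrC.
by rewrite (le_trans lo_Psig M_lo) (le_trans M_hi Psig_hi).
Qed.

End HermitianMatrices.

Theorem mainTheorem1 (C : numClosedFieldType) (Nd Nm : nat)
    (Phi : 'M[C]_Nm) (g : 'cV[C]_Nm) (Psi : 'M[C]_(Nd, Nm))
    (lmax lmin delta : C) :
  (0 < Nd)%N -> (Nd <= Nm)%N ->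
  mx_hermitian Phi -> mx_posdef Phi ->
  eigenvalue Phi lmax -> (forall a, eigenvalue Phi a -> a <= lmax) ->
  eigenvalue Phi lmin -> (forall a, eigenvalue Phi a -> lmin <= a) ->
  g != 0 ->
  0 < delta < 1 ->
  (forall a, eigenvalue (Psi *m mxH Psi) a -> 1 - delta <= a <= 1 + delta) ->
  (1 - delta) * sqnorm g <= sqnorm (Psi *m g) <= (1 + delta) * sqnorm g ->
  let pM := p_MVDR Phi g in
  let pC := p_CMVDR Phi Psi g in
  let R := pC - pM in
  [/\ lmin / sqnorm g <= pM <= lmax / sqnorm g,
      (1 - delta) * lmin / ((1 + delta) * sqnorm g) <= pC
        <= (1 + delta) * lmax / ((1 - delta) * sqnorm g)
    & (1 - delta) * lmin / ((1 + delta) * sqnorm g) - lmax / sqnorm g <= R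
        <= (1 + delta) * lmax / ((1 - delta) * sqnorm g) - lmin / sqnorm g].
Proof.
move=> _ _ hPhi Phi_pd _ Hmax Emin Hmin g_neq0 /andP[_ delta_lt1]
  Psi_eig Psig_bounds pM pC R.
have lmin_gt0 := posdef_eigenvalue_gt0 Phi_pd Emin.
have lmin_lmax : 0 < lmin <= lmax by rewrite lmin_gt0 Hmax.
have Phi_eig e : eigenvalue Phi e -> lmin <= e <= lmax by move=> Ee; rewrite Hmin ?Hmax.
have dm_gt0 : 0 < 1 - delta by rewrite subr_gt0.
have /andP[pM_lo pM_hi] := p_MVDR_bounds hPhi lmin_lmax Phi_eig g_neq0.
have /andP[pC_lo pC_hi] :=
  p_CMVDR_bounds hPhi lmin_lmax Phi_eig dm_gt0 Psi_eig Psig_bounds g_neq0.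
by split; [rewrite pM_lo | rewrite pC_lo | rewrite /R !lerB].
Qed.
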